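(* Let $k=3$, $\lambda>0$ and $0<\theta<1$. Put $\theta_c(3)=1/2$ and, for $\theta<1/2$, $\lambda_{\rm cr}(3)=\frac{1}{2-4\theta}\bigl(\frac43\bigr)^3$. Then: (1) if $\theta\ge1/2$, there is exactly one TISGM; (2) if $\theta<1/2$: (2a) if $\lambda\le\lambda_{\rm cr}(3)$ there is exactly one TISGM (corresponding to the solution $(x^*,x^* )$); (2b) if $\lambda>\lambda_{\rm cr}(3)$ there are exactly three TISGMs, corresponding to $(x^*,x^* )$ and two solutions $(x_1^*,x_2^* )$, $(x_2^*,x_1^* )$ with $x_1^*\ne x_2^*$.
   Context: SCWR model on the Cayley tree of order $k$ (each vertex has $k$ direct successors), spins in $\{-1,0,1\}$, activity $\lambda>0$, $\theta=e^{-J\beta}$; ferromagnetic means $0<\theta<1$. TISGMs are in one-to-one correspondence with the solutions $(x,y)\in(0,\infty)^2$ of $x=\lambda\bigl(\frac{1+x+\theta y}{1+x+y}\bigr)^k$, $y=\lambda\bigl(\frac{1+\theta x+y}{1+x+y}\bigr)^k$; the number of TISGMs is the number of such solutions. $x^*$ is the unique positive solution of $x=\lambda\bigl(\frac{1+(1+\theta)x}{1+2x}\bigr)^k$. *)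

From Stdlib Require Import Reals Lra.
Open Scope R_scope.

(* Positive solutions (x,y) of the TISGM system for the SCWR model on the
   Cayley tree of order k; they are in bijection with the TISGMs. *)
Definition tisgm_sol (k : nat) (lam th x y : R) : Prop :=
  0 < x /\ 0 < y /\
  x = lam * ((1 + x + th * y) / (1 + x + y)) ^ k /\
  y = lam * ((1 + th * x + y) / (1 + x + y)) ^ k.

Definition is_xstar (k : nat) (lam th x : R) : Prop :=
  0 < x /\ x = lam * ((1 + (1 + th) * x) / (1 + 2 * x)) ^ k.

Definition theta_c3 : R := 1 / 2.
Definition lambda_cr3 (th : R) : R := (1 / (2 - 4 * th)) * (4 / 3) ^ 3.

From Stdlib Require Import Reals Lra Psatz.
Open Scope R_scope.

(* Write a solution (x, y) of the TISGM system as x = lam a^3, y = lam b^3,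
   where a, b are the two ratios appearing in the system.
   - Diagonal solutions x = y are exactly the solutions x* of the one-variable
     equation; its right-hand side is non-increasing in x, so x* exists
     (intermediate value theorem) and is unique.  This holds for every k.
   - For k = 3 and a <> b, taking the sum and the difference of the two ratio
     equations and cancelling a - b shows that the system is equivalent to two
     equations in p = a + b and q = ab: a "product law" expressing q through p
     and a "sum equation" lam p^3 (p - 1 - th) = 2p - 1.  Real distinct a, b
     force 1 + th < p < 3/2.
   - On (1 + th, +oo) the function p^3 (p - 1 - th) / (2p - 1) is strictly
     increasing, so the sum equation has at most one root there, and it has a
     root below 3/2 iff its two sides compare correctly at p = 3/2, i.e. iff
     2 < lam (3/2)^3 (1/2 - th), which for th < 1/2 is lam > lambda_cr3 th.
   The root p determines {a, b}, hence the asymmetric solutions up to swapping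
   the coordinates; the theorem follows by combining the two cases. *)

Section DiagonalSolutions.

Variables (k : nat) (lam th : R).
Hypotheses (hlam : 0 < lam) (hth0 : 0 < th) (hth1 : th < 1).

Lemma tisgm_sol_swap x y : tisgm_sol k lam th x y -> tisgm_sol k lam th y x.
Proof.
  intros [hx [hy [ex ey]]]; repeat split; try assumption.
  - replace (1 + y + th * x) with (1 + th * x + y) by ring.
    replace (1 + y + x) with (1 + x + y) by ring. exact ey.
  - replace (1 + th * y + x) with (1 + x + th * y) by ring.
    replace (1 + y + x) with (1 + x + y) by ring. exact ex.
Qed.

Lemma is_xstar_iff_diagonal x : is_xstar k lam th x <-> tisgm_sol k lam th x x.
Proof.
  unfold is_xstar, tisgm_sol.
  replace (1 + x + th * x) with (1 + (1 + th) * x) by ring.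
  replace (1 + th * x + x) with (1 + (1 + th) * x) by ring.
  replace (1 + x + x) with (1 + 2 * x) by ring.
  tauto.
Qed.

Lemma diagonal_ratio_antitone u v : 0 <= u -> u <= v ->
  (1 + (1 + th) * v) / (1 + 2 * v) <= (1 + (1 + th) * u) / (1 + 2 * u).
Proof.
  intros hu huv.
  assert (gap : (1 + (1 + th) * u) / (1 + 2 * u) - (1 + (1 + th) * v) / (1 + 2 * v)
                = (1 - th) * (v - u) / ((1 + 2 * u) * (1 + 2 * v))) by (field; lra).
  assert (0 <= (1 - th) * (v - u) / ((1 + 2 * u) * (1 + 2 * v))).
  { unfold Rdiv; apply Rmult_le_pos; [nra | left; apply Rinv_0_lt_compat; nra]. }
  lra.
Qed.

(* Uniqueness of x*: a fixed point of a non-increasing map is unique. *)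
Lemma is_xstar_unique u v : is_xstar k lam th u -> is_xstar k lam th v -> u = v.
Proof.
  assert (no_lt : forall u v, is_xstar k lam th u -> is_xstar k lam th v -> ~ u < v).
  { intros u' v' [hu eu] [hv ev] huv.
    assert (hr : 0 <= (1 + (1 + th) * v') / (1 + 2 * v')).
    { left; apply Rdiv_lt_0_compat; nra. }
    pose proof (diagonal_ratio_antitone u' v' (Rlt_le _ _ hu) (Rlt_le _ _ huv)) as anti.
    pose proof (pow_incr _ _ k (conj hr anti)).
    nra. }
  intros Hu Hv; destruct (Rtotal_order u v) as [h | [h | h]];
    [ exfalso; exact (no_lt _ _ Hu Hv h) | exact h | exfalso; exact (no_lt _ _ Hv Hu h) ].
Qed.

(* Existence of x*: x (1+2x)^k - lam (1 + (1+th) x)^k changes sign on [0, lam + 1]. *)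
Lemma is_xstar_exists : exists x, is_xstar k lam th x.
Proof.
  set (f := fun x => x * (1 + 2 * x) ^ k - lam * (1 + (1 + th) * x) ^ k).
  assert (f_cont : continuity f) by (unfold f; reg).
  assert (f_neg : f 0 < 0).
  { unfold f; replace (1 + 2 * 0) with 1 by ring;
      replace (1 + (1 + th) * 0) with 1 by ring; rewrite pow1; lra. }
  set (M := lam + 1).
  assert (f_pos : 0 < f M).
  { assert (0 < (1 + 2 * M) ^ k) by (apply pow_lt; unfold M; lra).
    assert ((1 + (1 + th) * M) ^ k <= (1 + 2 * M) ^ k) by (apply pow_incr; unfold M; nra).
    unfold f, M in *; nra. }
  destruct (IVT f 0 M f_cont ltac:(unfold M; lra) f_neg f_pos) as [z [[hz0 _] fz]].
  assert (hz : 0 < z) by (destruct hz0 as [h | <-]; [exact h | lra]).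
  exists z; split; [exact hz |].
  assert (0 < (1 + 2 * z) ^ k) by (apply pow_lt; lra).
  unfold Rdiv; rewrite Rpow_mult_distr, pow_inv.
  unfold f in fz.
  apply (Rmult_eq_reg_r ((1 + 2 * z) ^ k)); [| lra].
  rewrite Rmult_assoc, Rmult_assoc, Rinv_l; lra.
Qed.

Lemma diagonal_sol_is_xstar xs x :
  is_xstar k lam th xs -> tisgm_sol k lam th x x -> x = xs.
Proof.
  intros hxs hx; apply is_xstar_unique; [apply is_xstar_iff_diagonal |]; assumption.
Qed.

End DiagonalSolutions.

Lemma cube_lt_compat u v : 0 < u -> u < v -> u ^ 3 < v ^ 3.
Proof.
  intros hu huv.
  replace (v ^ 3) with (u ^ 3 + (v - u) * (v * v + v * u + u * u)) by ring.
  assert (0 < (v - u) * (v * v + v * u + u * u)) by (apply Rmult_lt_0_compat; nra).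
  lra.
Qed.

(* The TISGM system for k = 3 rewritten in the ratios a, b, where
   x = lam a^3 and y = lam b^3 (denominators cleared). *)
Definition ratio_system (lam th a b : R) : Prop :=
  a * (1 + lam * a ^ 3 + lam * b ^ 3) = 1 + lam * a ^ 3 + th * (lam * b ^ 3) /\
  b * (1 + lam * a ^ 3 + lam * b ^ 3) = 1 + th * (lam * a ^ 3) + lam * b ^ 3.

Definition product_law (p q : R) : Prop := q * (2 * p - 1) = p ^ 2 * (p - 1).

Definition sum_equation (lam th p : R) : Prop := lam * p ^ 3 * (p - 1 - th) = 2 * p - 1.

Lemma tisgm_sol_ratio_form lam th x y : 0 < th -> tisgm_sol 3 lam th x y ->
  exists a b, 0 < a /\ 0 < b /\ x = lam * a ^ 3 /\ y = lam * b ^ 3 /\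
    ratio_system lam th a b.
Proof.
  intros hth [hx [hy [ex ey]]].
  set (a := (1 + x + th * y) / (1 + x + y)) in ex.
  set (b := (1 + th * x + y) / (1 + x + y)) in ey.
  exists a, b; repeat split; try assumption.
  - apply Rdiv_lt_0_compat; nra.
  - apply Rdiv_lt_0_compat; nra.
  - rewrite <- ex, <- ey; unfold a; field; lra.
  - rewrite <- ex, <- ey; unfold b; field; lra.
Qed.

Lemma tisgm_sol_of_ratio_system lam th a b : 0 < lam -> 0 < a -> 0 < b ->
  ratio_system lam th a b -> tisgm_sol 3 lam th (lam * a ^ 3) (lam * b ^ 3).
Proof.
  intros hlam ha hb [ea eb].
  assert (hx : 0 < lam * a ^ 3) by (apply Rmult_lt_0_compat; [| apply pow_lt]; assumption).
  assert (hy : 0 < lam * b ^ 3) by (apply Rmult_lt_0_compat; [| apply pow_lt]; assumption).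
  repeat split; try assumption.
  - rewrite <- ea; f_equal; f_equal; field; lra.
  - rewrite <- eb; f_equal; f_equal; field; lra.
Qed.

Lemma product_law_cube p q : product_law p q -> (p ^ 2 - q) * (2 * p - 1) = p ^ 3.
Proof.
  unfold product_law; intros law.
  transitivity (p ^ 2 * (2 * p - 1) - q * (2 * p - 1)); [ring | rewrite law; ring].
Qed.

(* Under the product law the discriminant p^2 - 4q has the sign of
   (3 - 2p) / (2p - 1). *)
Lemma product_law_discriminant p q : product_law p q ->
  (p ^ 2 - 4 * q) * (2 * p - 1) = p ^ 2 * (3 - 2 * p).
Proof.
  unfold product_law; intros law.
  transitivity (p ^ 2 * (2 * p - 1) - 4 * (q * (2 * p - 1))); [ring | rewrite law; ring].
Qed.

(* For a <> b the ratio system implies the product law and the sum equation: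
   the difference of the two equations can be divided by a - b. *)
Lemma sum_product_of_ratio_system lam th a b : th < 1 -> a <> b ->
  ratio_system lam th a b -> product_law (a + b) (a * b) /\ sum_equation lam th (a + b).
Proof.
  intros hth hab [ea eb].
  unfold product_law, sum_equation.
  set (p := a + b); set (q := a * b).
  set (L := lam * (p - 1 - th)).
  assert (sum_ab : (1 + lam * a ^ 3 + lam * b ^ 3) * (p - 1 - th) = 1 - th)
    by (unfold p; lra).
  assert (diff_ab : (a - b) * (1 + lam * a ^ 3 + lam * b ^ 3)
                    = (a - b) * ((1 - th) * lam * (p ^ 2 - q))) by (unfold p, q; nra).
  apply Rmult_eq_reg_l in diff_ab; [| intro e; apply hab; lra].
  assert (E1 : L * (p ^ 2 - q) = 1).
  { apply (Rmult_eq_reg_l (1 - th)); [| lra].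
    transitivity ((p - 1 - th) * ((1 - th) * lam * (p ^ 2 - q))); [unfold L; ring |].
    rewrite <- diff_ab; lra. }
  assert (E2 : L * (p ^ 3 - 3 * p * q) = 2 - p).
  { transitivity ((1 + lam * (p ^ 3 - 3 * p * q)) * (p - 1 - th) - (p - 1 - th));
      [unfold L; ring |].
    replace (1 + lam * (p ^ 3 - 3 * p * q)) with (1 + lam * a ^ 3 + lam * b ^ 3)
      by (unfold p, q; ring).
    lra. }
  assert (law : q * (2 * p - 1) = p ^ 2 * (p - 1)).
  { assert (p ^ 3 - 3 * p * q = (2 - p) * (p ^ 2 - q)).
    { rewrite <- E2; transitivity ((p ^ 3 - 3 * p * q) * (L * (p ^ 2 - q)));
        [rewrite E1; ring | ring]. }
    transitivity (p ^ 2 * (p - 1) - ((p ^ 3 - 3 * p * q) - (2 - p) * (p ^ 2 - q)) / 2);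
      [field | lra]. }
  split; [exact law |].
  pose proof (product_law_cube p q law) as cube.
  transitivity (L * ((p ^ 2 - q) * (2 * p - 1))); [rewrite cube; unfold L; ring |].
  rewrite <- Rmult_assoc, E1; ring.
Qed.

Lemma ratio_system_of_sum_product lam th a b : 0 < lam -> 0 < th -> th < 1 ->
  product_law (a + b) (a * b) -> sum_equation lam th (a + b) -> ratio_system lam th a b.
Proof.
  intros hlam hth0 hth1 law hsum.
  pose proof (product_law_cube _ _ law) as cube.
  unfold product_law, sum_equation, ratio_system in *.
  set (p := a + b) in *; set (q := a * b) in *.
  set (L := lam * (p - 1 - th)).
  set (x := lam * a ^ 3); set (y := lam * b ^ 3); set (S := 1 + x + y).
  assert (h2p : 2 * p - 1 <> 0).
  { intro e; assert (half : p = 1 / 2) by lra; rewrite half in hsum; nra. }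
  assert (E1 : L * (p ^ 2 - q) = 1).
  { apply (Rmult_eq_reg_r (2 * p - 1)); [| exact h2p].
    rewrite Rmult_assoc, cube, <- hsum; unfold L; ring. }
  assert (E2 : L * (p ^ 3 - 3 * p * q) = 2 - p).
  { apply (Rmult_eq_reg_r (2 * p - 1)); [| exact h2p].
    transitivity (L * p ^ 3 * (2 - p) - 3 * p * L * (q * (2 * p - 1) - p ^ 2 * (p - 1)));
      [ring | rewrite law].
    replace (L * p ^ 3) with (2 * p - 1) by (unfold L; rewrite <- hsum; ring); ring. }
  assert (sum_ab : S * (p - 1 - th) = 1 - th).
  { transitivity ((p - 1 - th) + L * (p ^ 3 - 3 * p * q)); [| rewrite E2; ring].
    unfold S, x, y, L, p, q; ring. }
  assert (hS : S = (1 - th) * lam * (p ^ 2 - q)).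
  { apply (Rmult_eq_reg_r (p - 1 - th)); [| intro e; rewrite e in sum_ab; lra].
    rewrite sum_ab; transitivity ((1 - th) * (L * (p ^ 2 - q))); [rewrite E1 |]; unfold L; ring. }
  assert (dS : (a - b) * S = (1 - th) * (x - y)) by (rewrite hS; unfold x, y, p, q; ring).
  unfold p, S in *; split; lra.
Qed.

(* For distinct positive ratios, (a - b)^2 (2p - 1) = p^2 (3 - 2p) forces
   p < 3/2, then 2p - 1 > 0 and the sum equation forces p > 1 + th. *)
Lemma asym_sum_range lam th a b : 0 < lam -> 0 < a -> 0 < b -> a <> b ->
  product_law (a + b) (a * b) -> sum_equation lam th (a + b) -> 1 + th < a + b < 3 / 2.
Proof.
  intros hlam ha hb hab law hsum.
  pose proof (product_law_discriminant _ _ law) as disc.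
  replace ((a + b) ^ 2 - 4 * (a * b)) with ((a - b) ^ 2) in disc by ring.
  unfold sum_equation in hsum.
  set (p := a + b) in *.
  assert (hd : 0 < (a - b) ^ 2) by (rewrite <- Rsqr_pow2; apply Rsqr_pos_lt; lra).
  assert (hp2 : 0 < p ^ 2) by (apply pow_lt; unfold p; lra).
  assert (upper : p < 3 / 2).
  { destruct (Rlt_or_le p (3 / 2)) as [h | h]; [exact h | nra]. }
  assert (half : 1 / 2 < p).
  { destruct (Rlt_or_le (1 / 2) p) as [h | h]; [exact h | nra]. }
  assert (hp3 : 0 < lam * p ^ 3) by (apply Rmult_lt_0_compat; [| apply pow_lt]; lra).
  split; [nra | exact upper].
Qed.

(* p^3 (p - 1 - th) / (2p - 1) is strictly increasing on (1 + th, +oo),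
   stated without division. *)
Lemma sum_ratio_strict_mono th p1 p2 : 0 < th -> 1 + th < p1 -> p1 < p2 ->
  (2 * p2 - 1) * p1 ^ 3 * (p1 - 1 - th) < (2 * p1 - 1) * p2 ^ 3 * (p2 - 1 - th).
Proof.
  intros hth h1 h12.
  assert (cubic : (2 * p2 - 1) * p1 ^ 3 <= (2 * p1 - 1) * p2 ^ 3).
  { assert (e : (2 * p1 - 1) * p2 ^ 3 - (2 * p2 - 1) * p1 ^ 3 =
       (p2 - p1) * (p1 * p1 * (p2 - 1) + p2 * p2 * (p1 - 1)
                    + p1 * p2 * (p1 - 1) + p1 * p2 * p2)) by ring.
    assert (0 <= p1 * p1 * (p2 - 1)) by (apply Rmult_le_pos; nra).
    assert (0 <= p2 * p2 * (p1 - 1)) by (apply Rmult_le_pos; nra).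
    assert (0 <= p1 * p2 * (p1 - 1)) by (apply Rmult_le_pos; nra).
    assert (0 <= (p2 - p1) * (p1 * p1 * (p2 - 1) + p2 * p2 * (p1 - 1)
                               + p1 * p2 * (p1 - 1) + p1 * p2 * p2)) by (apply Rmult_le_pos; nra).
    lra. }
  assert (0 < (2 * p2 - 1) * p1 ^ 3) by (apply Rmult_lt_0_compat; [| apply pow_lt]; lra).
  apply Rlt_le_trans with ((2 * p2 - 1) * p1 ^ 3 * (p2 - 1 - th)).
  - apply Rmult_lt_compat_l; lra.
  - apply Rmult_le_compat_r; lra.
Qed.

Lemma sum_equation_unique lam th p p' :
  0 < lam -> 0 < th -> 1 + th < p -> 1 + th < p' ->
  sum_equation lam th p -> sum_equation lam th p' -> p = p'.
Proof.
  unfold sum_equation; intros hlam hth hp hp' e e'.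
  assert (no_lt : forall u v, 1 + th < u -> u < v ->
            lam * u ^ 3 * (u - 1 - th) = 2 * u - 1 ->
            lam * v ^ 3 * (v - 1 - th) = 2 * v - 1 -> False).
  { intros u v hu huv eu ev.
    pose proof (Rmult_lt_compat_l lam _ _ hlam (sum_ratio_strict_mono th u v hth hu huv))
      as mono.
    replace (lam * ((2 * v - 1) * u ^ 3 * (u - 1 - th)))
      with ((2 * v - 1) * (lam * u ^ 3 * (u - 1 - th))) in mono by ring.
    replace (lam * ((2 * u - 1) * v ^ 3 * (v - 1 - th)))
      with ((2 * u - 1) * (lam * v ^ 3 * (v - 1 - th))) in mono by ring.
    rewrite eu, ev in mono; lra. }
  destruct (Rtotal_order p p') as [h | [h | h]]; [exfalso; eauto | exact h | exfalso; eauto].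
Qed.

Lemma sum_equation_root_iff lam th : 0 < lam -> 0 < th ->
  (exists p, 1 + th < p < 3 / 2 /\ sum_equation lam th p) <->
  2 < lam * (3 / 2) ^ 3 * (1 / 2 - th).
Proof.
  intros hlam hth; unfold sum_equation; split.
  - intros [p [[hp1 hp2] hp]].
    pose proof (Rmult_lt_compat_l lam _ _ hlam (sum_ratio_strict_mono th p (3 / 2) hth hp1 hp2))
      as mono.
    replace (lam * ((2 * (3 / 2) - 1) * p ^ 3 * (p - 1 - th)))
      with (2 * (lam * p ^ 3 * (p - 1 - th))) in mono by field.
    replace (lam * ((2 * p - 1) * (3 / 2) ^ 3 * (3 / 2 - 1 - th)))
      with ((2 * p - 1) * (lam * (3 / 2) ^ 3 * (1 / 2 - th))) in mono by field.
    rewrite hp in mono.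
    destruct (Rlt_or_le 2 (lam * (3 / 2) ^ 3 * (1 / 2 - th))) as [h | h]; [exact h | nra].
  - intros hc.
    assert (hth2 : th < 1 / 2).
    { destruct (Rlt_or_le th (1 / 2)) as [h | h]; [exact h | exfalso].
      assert (0 < lam * (3 / 2) ^ 3) by (apply Rmult_lt_0_compat; [| apply pow_lt]; lra).
      nra. }
    set (h := fun p => lam * p ^ 3 * (p - 1 - th) - (2 * p - 1)).
    assert (h_cont : continuity h) by (unfold h; reg).
    assert (h_lo : h (1 + th) < 0) by (unfold h; ring_simplify; lra).
    assert (h_hi : 0 < h (3 / 2)).
    { unfold h; replace (3 / 2 - 1 - th) with (1 / 2 - th) by field; lra. }
    destruct (IVT h (1 + th) (3 / 2) h_cont ltac:(lra) h_lo h_hi) as [p [[hp1 hp2] hp]].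
    exists p; unfold h in hp; repeat split; try lra.
    + destruct hp1 as [hp1 | <-]; [exact hp1 | lra].
    + destruct hp2 as [hp2 | ->]; [exact hp2 | lra].
Qed.

Lemma vieta_positive_roots p q : 0 < p -> 0 < q -> 4 * q < p ^ 2 ->
  exists a b, 0 < b /\ b < a /\ a + b = p /\ a * b = q.
Proof.
  intros hp hq hdisc.
  set (d := sqrt (p ^ 2 - 4 * q)).
  assert (hd : 0 < d) by (apply sqrt_lt_R0; lra).
  assert (dd : d * d = p ^ 2 - 4 * q) by (apply sqrt_sqrt; lra).
  clearbody d.
  assert (d < p) by nra.
  exists ((p + d) / 2), ((p - d) / 2); repeat split; lra.
Qed.

Lemma sum_product_unique a b a' b' : a + b = a' + b' -> a * b = a' * b' ->
  (a = a' /\ b = b') \/ (a = b' /\ b = a').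
Proof.
  intros e1 e2.
  assert (e : (a - a') * (a - b') = 0).
  { transitivity (a * a - a * (a' + b') + a' * b'); [ring |].
    rewrite <- e1, <- e2; ring. }
  destruct (Rmult_integral _ _ e); [left | right]; lra.
Qed.

Section OrderThree.

Variables (lam th : R).
Hypotheses (hlam : 0 < lam) (hth0 : 0 < th) (hth1 : th < 1).

Lemma asym_sol_data x y : tisgm_sol 3 lam th x y -> x <> y ->
  exists a b, 0 < a /\ 0 < b /\ x = lam * a ^ 3 /\ y = lam * b ^ 3 /\
    product_law (a + b) (a * b) /\ sum_equation lam th (a + b) /\ 1 + th < a + b < 3 / 2.
Proof.
  intros hsol hxy.
  destruct (tisgm_sol_ratio_form lam th x y hth0 hsol) as [a [b [ha [hb [ex [ey hr]]]]]].
  assert (hab : a <> b) by (intro e; apply hxy; rewrite ex, ey, e; reflexivity).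
  destruct (sum_product_of_ratio_system lam th a b hth1 hab hr) as [law hsum].
  exists a, b; repeat split; try assumption;
    apply (asym_sum_range lam th a b); assumption.
Qed.

Lemma asym_sol_threshold x y : tisgm_sol 3 lam th x y -> x <> y ->
  2 < lam * (3 / 2) ^ 3 * (1 / 2 - th).
Proof.
  intros hsol hxy.
  destruct (asym_sol_data x y hsol hxy) as [a [b [_ [_ [_ [_ [_ [hsum hrange]]]]]]]].
  apply (sum_equation_root_iff lam th hlam hth0); exists (a + b); split; assumption.
Qed.

Lemma asym_sol_unique x y x' y' : tisgm_sol 3 lam th x y -> x <> y ->
  tisgm_sol 3 lam th x' y' -> x' <> y' -> (x' = x /\ y' = y) \/ (x' = y /\ y' = x).
Proof.
  intros s n s' n'.
  destruct (asym_sol_data x y s n)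
    as [a [b [ha [hb [ex [ey [law [hsum [hp1 hp2]]]]]]]]].
  destruct (asym_sol_data x' y' s' n')
    as [a' [b' [ha' [hb' [ex' [ey' [law' [hsum' [hp1' hp2']]]]]]]]].
  assert (ep : a' + b' = a + b) by (apply (sum_equation_unique lam th); assumption).
  assert (eq : a' * b' = a * b).
  { unfold product_law in law, law'; rewrite ep in law'.
    apply (Rmult_eq_reg_r (2 * (a + b) - 1)); [rewrite law, law'; reflexivity | lra]. }
  destruct (sum_product_unique _ _ _ _ ep eq) as [[-> ->] | [-> ->]];
    [left | right]; split; congruence.
Qed.

(* Above the threshold an asymmetric solution exists: take the root p of the
   sum equation, q from the product law, and a, b the roots of t^2 - pt + q. *)
Lemma asym_sol_exists : 2 < lam * (3 / 2) ^ 3 * (1 / 2 - th) ->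
  exists x1 x2, x1 <> x2 /\ tisgm_sol 3 lam th x1 x2.
Proof.
  intros hc.
  destruct (proj2 (sum_equation_root_iff lam th hlam hth0) hc) as [p [[hp1 hp2] hsum]].
  set (q := p ^ 2 * (p - 1) / (2 * p - 1)).
  assert (law : product_law p q) by (unfold product_law, q; field; lra).
  assert (hq : 0 < q).
  { unfold q; apply Rdiv_lt_0_compat; [apply Rmult_lt_0_compat; [apply pow_lt |] |]; lra. }
  assert (hdisc : 4 * q < p ^ 2).
  { pose proof (product_law_discriminant _ _ law).
    assert (0 < p ^ 2 * (3 - 2 * p)) by (apply Rmult_lt_0_compat; [apply pow_lt |]; lra).
    nra. }
  clearbody q.
  destruct (vieta_positive_roots p q ltac:(lra) hq hdisc) as [a [b [hb [hba [<- <-]]]]].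
  exists (lam * a ^ 3), (lam * b ^ 3); split.
  - pose proof (cube_lt_compat b a hb hba); nra.
  - apply tisgm_sol_of_ratio_system; try lra.
    apply ratio_system_of_sum_product; assumption.
Qed.

Lemma unique_sol_below_threshold xs : lam * (3 / 2) ^ 3 * (1 / 2 - th) <= 2 ->
  is_xstar 3 lam th xs -> forall x y, tisgm_sol 3 lam th x y <-> (x = xs /\ y = xs).
Proof.
  intros hc hxs x y; split.
  - intros s; destruct (Req_dec x y) as [<- | n].
    + pose proof (diagonal_sol_is_xstar 3 lam th hlam hth0 hth1 xs x hxs s); tauto.
    + pose proof (asym_sol_threshold x y s n); lra.
  - intros [-> ->]; apply is_xstar_iff_diagonal; exact hxs.
Qed.

Lemma three_sols_above_threshold xs : 2 < lam * (3 / 2) ^ 3 * (1 / 2 - th) ->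
  is_xstar 3 lam th xs ->
  exists x1 x2, x1 <> x2 /\
    forall x y, tisgm_sol 3 lam th x y <->
      ((x = xs /\ y = xs) \/ (x = x1 /\ y = x2) \/ (x = x2 /\ y = x1)).
Proof.
  intros hc hxs.
  destruct (asym_sol_exists hc) as [x1 [x2 [n12 s12]]].
  exists x1, x2; split; [exact n12 |]; intros x y; split.
  - intros s; destruct (Req_dec x y) as [<- | n].
    + pose proof (diagonal_sol_is_xstar 3 lam th hlam hth0 hth1 xs x hxs s); tauto.
    + right; exact (asym_sol_unique x1 x2 x y s12 n12 s n).
  - intros [[-> ->] | [[-> ->] | [-> ->]]].
    + apply is_xstar_iff_diagonal; exact hxs.
    + exact s12.
    + apply tisgm_sol_swap; exact s12.
Qed.

End OrderThree.

Lemma lambda_cr3_lt_iff lam th : th < 1 / 2 ->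
  (lambda_cr3 th < lam <-> 2 < lam * (3 / 2) ^ 3 * (1 / 2 - th)).
Proof.
  intros hth.
  assert (hD : 0 < 2 - 4 * th) by lra.
  assert (lcr : lambda_cr3 th * (2 - 4 * th) = 64 / 27) by (unfold lambda_cr3; field; lra).
  replace (lam * (3 / 2) ^ 3 * (1 / 2 - th)) with (27 / 32 * (lam * (2 - 4 * th))) by field.
  split; intro h; nra.
Qed.

Theorem mainTheorem7 (lam th : R) (hlam : 0 < lam) (hth0 : 0 < th) (hth1 : th < 1) :
  (* (1) *)
  (theta_c3 <= th ->
     exists x y, tisgm_sol 3 lam th x y /\
       forall x' y', tisgm_sol 3 lam th x' y' -> x' = x /\ y' = y) /\
  (* (2a) *)
  (th < theta_c3 -> lam <= lambda_cr3 th ->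
     (exists xs, is_xstar 3 lam th xs) /\
     forall xs, is_xstar 3 lam th xs ->
       forall x y, tisgm_sol 3 lam th x y <-> (x = xs /\ y = xs)) /\
  (* (2b) *)
  (th < theta_c3 -> lambda_cr3 th < lam ->
     (exists xs, is_xstar 3 lam th xs) /\
     forall xs, is_xstar 3 lam th xs ->
       exists x1 x2, x1 <> x2 /\
         forall x y, tisgm_sol 3 lam th x y <->
           ((x = xs /\ y = xs) \/ (x = x1 /\ y = x2) \/ (x = x2 /\ y = x1))).
Proof.
  unfold theta_c3.
  destruct (is_xstar_exists 3 lam th hlam hth0 hth1) as [xs hxs].
  split; [| split].
  - intros hth.
    assert (below : lam * (3 / 2) ^ 3 * (1 / 2 - th) <= 2).
    { assert (0 < lam * (3 / 2) ^ 3) by (apply Rmult_lt_0_compat; [| apply pow_lt]; lra).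
      nra. }
    exists xs, xs; split; [apply is_xstar_iff_diagonal; exact hxs |].
    intros x' y'; apply (unique_sol_below_threshold lam th hlam hth0 hth1 xs below hxs).
  - intros hth hcr; split; [exists xs; exact hxs |].
    intros xs' hxs'; apply (unique_sol_below_threshold lam th hlam hth0 hth1 xs'); [| exact hxs'].
    destruct (Rle_or_lt (lam * (3 / 2) ^ 3 * (1 / 2 - th)) 2) as [h | h]; [exact h |].
    apply (lambda_cr3_lt_iff lam th hth) in h; lra.
  - intros hth hcr; split; [exists xs; exact hxs |].
    intros xs' hxs'; apply (three_sols_above_threshold lam th hlam hth0 hth1 xs'); [| exact hxs'].
    apply (lambda_cr3_lt_iff lam th hth); exact hcr.
Qed.
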